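(* Let $q$ be an odd prime power and $\varphi_3$ the coloring defined below (with $d=3$). No set $S\subseteq(\mathbb{F}_q^* )^3$ of $6$ vectors has a leftover structure under $\varphi_3$.
   Context: Let $d=3$. $\mathbb{F}_q^*$ is the set of nonzero elements of $\mathbb{F}_q$, endowed with an arbitrary fixed linear order; $(\mathbb{F}_q^* )^d$ is ordered lexicographically with respect to it. Let $C_d = \mathrm{DOT} \sqcup \mathrm{ZERO}\sqcup\mathrm{UP}\sqcup\mathrm{DOWN}$, where $\mathrm{DOT} = \mathbb{F}_q^*$ and ZERO, UP, DOWN are three disjoint copies of $\{1,\dots,d\}\times \mathbb{F}_q$. For distinct $x<y$ in $(\mathbb{F}_q^* )^d$, let $i$ be the first coordinate where $x$ and $y$ differ, and $x\cdot y$ the standard dot product; $\varphi_d(x,y)=\varphi_d(y,x)$ is $(i,x_i+y_i)$ in ZERO if $x\cdot y=0$; $(i,x_i+y_i)$ in UP if $x\cdot y\ne 0$ and $x\cdot y=x\cdot x$; $(i,x_i+y_i)$ in DOWN if $x\cdot y\notin\{0,x\cdot x\}$ and $x\cdot y=y\cdot y$; and $x\cdot y\in\mathrm{DOT}$ otherwise. For a vertex set $A$, $\varphi_d(A)$ is the set of colors on pairs inside $A$. $S$ has a leftover structure under $\varphi_d$ if $|S|=1$, or $S$ has a partition $S=A\cup B$ into nonempty sets such that $A$ and $B$ each have a leftover structure, $\varphi_d(A)\cap\varphi_d(B)=\emptyset$, and there is a color $\gamma$ with $\varphi_d(a,b)=\gamma$ for all $a\in A$, $b\in B$ and $\gamma\notin\varphi_d(A)\cup\varphi_d(B)$.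 *)

From HB Require Import structures.
From mathcomp Require Import all_boot all_order all_algebra all_field.
Set Implicit Arguments. Unset Strict Implicit. Unset Printing Implicit Defensive.
Import GRing.Theory.
Local Open Scope ring_scope.

Section Coloring.
Variable (F : finFieldType) (d : nat).

Definition vec := {ffun 'I_d -> F}.

Definition nzvec (x : vec) : bool := [forall i, x i != 0].

Definition linear_order_on_units (lt : rel F) : Prop :=
  [/\ (forall a, a != 0 -> ~~ lt a a),
      (forall a b c, a != 0 -> b != 0 -> c != 0 -> lt a b -> lt b c -> lt a c)
    & (forall a b, a != 0 -> b != 0 -> a != b -> lt a b || lt b a)].

Definition first_diff_at (x y : vec) (i : 'I_d) : bool :=
  (x i != y i) && [forall j : 'I_d, (j < i)%N ==> (x j == y j)].

Definition lexlt (lt : rel F) (x y : vec) : bool :=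
  [exists i, first_diff_at x y i && lt (x i) (y i)].

Definition dotp (x y : vec) : F := \sum_(i < d) x i * y i.

Definition color := (F + (('I_d * F) + (('I_d * F) + ('I_d * F))))%type.
Definition DOT (a : F) : color := inl a.
Definition ZERO (p : 'I_d * F) : color := inr (inl p).
Definition UP (p : 'I_d * F) : color := inr (inr (inl p)).
Definition DOWN (p : 'I_d * F) : color := inr (inr (inr p)).

(* color of the pair {x,y} given x < y (i = first differing coordinate) *)
Definition col_ordered (x y : vec) : color :=
  match [pick i | first_diff_at x y i] with
  | None => DOT 0 (* unreachable for x <> y *)
  | Some i =>
      let c := (i, x i + y i) in
      if dotp x y == 0 then ZERO c
      else if dotp x y == dotp x x then UP c
      else if dotp x y == dotp y y then DOWN c
      else DOT (dotp x y)
  end.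

Definition phi (lt : rel F) (x y : vec) : color :=
  if lexlt lt x y then col_ordered x y else col_ordered y x.

Definition phiset (lt : rel F) (A : {set vec}) : {set color} :=
  [set phi lt a b | a in A, b in A & a != b].

Inductive leftover (lt : rel F) : {set vec} -> Prop :=
  | leftover_single (S : {set vec}) : #|S| = 1%N -> leftover lt S
  | leftover_split (A B : {set vec}) (gamma : color) :
      A != set0 -> B != set0 -> [disjoint A & B] ->
      leftover lt A -> leftover lt B ->
      [disjoint phiset lt A & phiset lt B] ->
      (forall a b, a \in A -> b \in B -> phi lt a b = gamma) ->
      gamma \notin phiset lt A :|: phiset lt B ->
      leftover lt (A :|: B).

End Coloring.

(* Leftover sets of vectors with nonzero coordinates have at most five elements.  Split a leftover set S = A ∪ B with constant colour γ
   across the split.  If γ is a DOT colour c, then a·b = c on A × B; otherwise every a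
   and b first differ at the same coordinate i with a_i + b_i constant, so a_i and b_i
   are constant and a·b does not depend on one of its two arguments.  Either way each
   part lies in a plane, and it lies on a line (two independent planes) as soon as S is
   coplanar or both parts have two points.  Three points of a line never give
   φ(x, y) = φ(x', y), so a collinear leftover set has at most 2 points, a coplanar one
   at most 2 + 2, and an arbitrary one at most max (1 + 4, 2 + 2) = 5. *)

From mathcomp Require Import all_boot all_order all_algebra all_field.
From mathcomp Require Import ring.
Set Implicit Arguments. Unset Strict Implicit. Unset Printing Implicit Defensive.
Import GRing.Theory.
Local Open Scope ring_scope.

Section Vectors.
Variables (F : finFieldType) (d : nat).
Implicit Types (x y z u v w n : vec F d) (X : {set vec F d}).

Lemma dotpC x y : dotp x y = dotp y x.
Proof. by apply: eq_bigr => i _; rewrite mulrC. Qed.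

Lemma dotpBl x y z : dotp (x - y) z = dotp x z - dotp y z.
Proof. by rewrite /dotp -sumrB; apply: eq_bigr => i _; rewrite !ffunE mulrBl. Qed.

Lemma dotpBr x y z : dotp x (y - z) = dotp x y - dotp x z.
Proof. by rewrite !(dotpC x) dotpBl. Qed.

Lemma dotp0r x : dotp x 0 = 0.
Proof. by rewrite /dotp big1 // => i _; rewrite ffunE mulr0. Qed.

Lemma vec_neq0P v : reflect (exists i, v i != 0) (v != 0).
Proof.
apply: (iffP idP) => [v0 | [i]]; last by apply: contraNneq => ->; rewrite ffunE.
apply/existsP; apply: contraNT v0 => /existsPn v0.
by apply/eqP/ffunP => i; rewrite ffunE; apply/eqP; rewrite -[_ == _]negbK v0.
Qed.

Definition proportional u v := exists t, forall i, u i = t * v i.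

Lemma dotp_proportional x u v t : (forall i, u i = t * v i) -> dotp x u = t * dotp x v.
Proof. by move=> uv; rewrite /dotp mulr_sumr; apply: eq_bigr => i _; rewrite uv mulrCA. Qed.

Lemma not_proportional x u v :
  u != v -> dotp x u = dotp x v -> dotp x v != 0 -> ~ proportional u v.
Proof.
move=> nuv xuv xv0 [t uv]; have t1 : t = 1.
  by apply: (mulIf xv0); rewrite mul1r -(dotp_proportional x uv).
by move/eqP: nuv; apply; apply/ffunP => i; rewrite uv t1 mul1r.
Qed.

Definition delta (i : 'I_d) : vec F d := [ffun j => (j == i)%:R].

Lemma delta_not_proportional i j : i != j -> ~ proportional (delta i) (delta j).
Proof. by move=> ij [t /(_ i) /eqP]; rewrite !ffunE eqxx (negbTE ij) /= mulr0 oner_eq0. Qed.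

Lemma dotp_delta x i : dotp x (delta i) = x i.
Proof.
rewrite /dotp (bigD1 i) //= ffunE eqxx mulr1 big1 ?addr0 // => j /negbTE ji.
by rewrite ffunE ji mulr0.
Qed.

Lemma delta_neq0 i : delta i != 0.
Proof. by apply/eqP => /ffunP/(_ i); rewrite !ffunE eqxx; apply/eqP/oner_neq0. Qed.

Definition dot_const X n := {in X &, forall x y, dotp x n = dotp y n}.

Definition collinear X := exists w, {in X &, forall x y, proportional (x - y) w}.

End Vectors.

Arguments delta {F d} i.

Section Coloring.
Variables (F : finFieldType) (d : nat) (lt : rel F).
Implicit Types (a b x y : vec F d) (A B X : {set vec F d}).

Lemma first_diff_at_uniq x y i j :
  first_diff_at x y i -> first_diff_at x y j -> i = j.
Proof.
case/andP=> xyi /forallP fi /andP[xyj /forallP fj]; apply: val_inj.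
case: (ltngtP i j) => // [ij|ji]; first by move: (implyP (fj i) ij); rewrite (negbTE xyi).
by move: (implyP (fi j) ji); rewrite (negbTE xyj).
Qed.

Lemma first_diff_atC x y i : first_diff_at x y i = first_diff_at y x i.
Proof.
by rewrite /first_diff_at eq_sym; congr (_ && _); apply: eq_forallb => j; rewrite eq_sym.
Qed.

Lemma first_diff_at_exists x y : x != y -> exists i, first_diff_at x y i.
Proof.
move=> nxy; have [i0] : exists i, (x - y) i != 0 by apply/vec_neq0P; rewrite subr_eq0.
rewrite !ffunE subr_eq0 => xyi0.
case: (arg_minnP (P := fun i => x i != y i) (@nat_of_ord d) xyi0) => i xyi imin.
exists i; rewrite /first_diff_at xyi.
by apply/forallP => j; apply/implyP; apply: contraTT => /imin; rewrite leqNgt.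
Qed.

Lemma lexlt_first_diff x y i : first_diff_at x y i -> lexlt lt x y = lt (x i) (y i).
Proof.
move=> fd; apply/existsP/idP => [[j /andP[fdj]]|]; last by exists i; rewrite fd.
by rewrite (first_diff_at_uniq fdj fd).
Qed.

Lemma col_ordered_first_diff x y i : first_diff_at x y i ->
  col_ordered x y =
    if dotp x y == 0 then ZERO (i, x i + y i)
    else if dotp x y == dotp x x then UP (i, x i + y i)
    else if dotp x y == dotp y y then DOWN (i, x i + y i)
    else DOT d (dotp x y).
Proof.
move=> fd; rewrite /col_ordered; case: pickP => [j fdj|/(_ i)]; last by rewrite fd.
by rewrite (first_diff_at_uniq fdj fd).
Qed.

Variant phi_spec x y : color F d -> Prop :=
  | PhiDot of dotp x y != 0 & dotp x y != dotp x x & dotp x y != dotp y y :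
      phi_spec x y (DOT d (dotp x y))
  | PhiZero i of first_diff_at x y i & dotp x y = 0 :
      phi_spec x y (ZERO (i, x i + y i))
  | PhiUp i of first_diff_at x y i
      & dotp x y = (if lt (x i) (y i) then dotp x x else dotp y y) :
      phi_spec x y (UP (i, x i + y i))
  | PhiDown i of first_diff_at x y i
      & dotp x y = (if lt (x i) (y i) then dotp y y else dotp x x) :
      phi_spec x y (DOWN (i, x i + y i)).

Lemma phiP x y : x != y -> phi_spec x y (phi lt x y).
Proof.
move=> nxy; have [i fd] := first_diff_at_exists nxy.
have fd' : first_diff_at y x i by rewrite -first_diff_atC.
rewrite /phi (lexlt_first_diff fd); case: ifP => xy.
  rewrite (col_ordered_first_diff fd).
  have [h|nz] := eqVneq (dotp x y) 0; first exact: PhiZero.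
  have [h|nxx] := eqVneq (dotp x y) (dotp x x); first by apply: PhiUp; rewrite ?xy.
  have [h|nyy] := eqVneq (dotp x y) (dotp y y); first by apply: PhiDown; rewrite ?xy.
  exact: PhiDot.
rewrite (col_ordered_first_diff fd') (dotpC y x) (addrC (y i)).
have [h|nz] := eqVneq (dotp x y) 0; first exact: PhiZero.
have [h|nyy] := eqVneq (dotp x y) (dotp y y); first by apply: PhiUp; rewrite ?xy.
have [h|nxx] := eqVneq (dotp x y) (dotp x x); first by apply: PhiDown; rewrite ?xy.
exact: PhiDot.
Qed.

Lemma phi_DOT x y c : x != y -> phi lt x y = DOT d c ->
  [/\ dotp x y = c, c != 0, c != dotp x x & c != dotp y y].
Proof. by move=> nxy; case: (phiP nxy) => [? ? ? [<-] // | ? ? ? | ? ? ? | ? ? ?]; case. Qed.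

Lemma phi_ZERO x y p : x != y -> phi lt x y = ZERO p ->
  [/\ first_diff_at x y p.1, x p.1 + y p.1 = p.2 & dotp x y = 0].
Proof. by move=> nxy; case: (phiP nxy) => [? ? ? | i ? ? [<-] // | ? ? ? | ? ? ?]; case. Qed.

Lemma phi_UP x y p : x != y -> phi lt x y = UP p ->
  [/\ first_diff_at x y p.1, x p.1 + y p.1 = p.2
    & dotp x y = if lt (x p.1) (y p.1) then dotp x x else dotp y y].
Proof. by move=> nxy; case: (phiP nxy) => [? ? ? | ? ? ? | i ? ? [<-] // | ? ? ?]; case. Qed.

Lemma phi_DOWN x y p : x != y -> phi lt x y = DOWN p ->
  [/\ first_diff_at x y p.1, x p.1 + y p.1 = p.2
    & dotp x y = if lt (x p.1) (y p.1) then dotp y y else dotp x x].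
Proof. by move=> nxy; case: (phiP nxy) => [? ? ? | ? ? ? | ? ? ? | i ? ? [<-] //]; case. Qed.

Hypothesis lt_order : linear_order_on_units lt.

Lemma phiC x y : nzvec x -> nzvec y -> phi lt x y = phi lt y x.
Proof.
have [-> //|nxy] := eqVneq x y; move=> /forallP nx /forallP ny.
have [i fd] := first_diff_at_exists nxy.
have xyi : x i != y i by case/andP: fd.
have fd' : first_diff_at y x i by rewrite -first_diff_atC.
have [irr trans total] := lt_order.
rewrite /phi (lexlt_first_diff fd) (lexlt_first_diff fd').
case xy: (lt (x i) (y i)); case yx: (lt (y i) (x i)) => //.
  by move: (irr _ (nx i)); rewrite (trans _ _ _ (nx i) (ny i) (nx i) xy yx).
by move: (total _ _ (nx i) (ny i) xyi); rewrite xy yx.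
Qed.

Lemma collinear_phi_neq X x x' y : collinear X -> x \in X -> x' \in X -> y \in X ->
  x != x' -> x != y -> x' != y -> phi lt x y != phi lt x' y.
Proof.
move=> [w colX] hx hx' hy nxx' nxy nx'y; apply/eqP.
have [t dxx'] := colX x x' hx hx'; have [s dxy] := colX x y hx hy.
have t0 : t != 0.
  move: nxx'; apply: contra_neq => t0; apply/ffunP => i.
  by move: (dxx' i); rewrite !ffunE t0 mul0r => /eqP; rewrite subr_eq0 => /eqP.
have same_lex_pair i : first_diff_at x y i -> x' i + y i = x i + y i -> False.
  move=> /andP[xyi _] /addIr x'xi.
  have /eqP : t * w i = 0 by rewrite -dxx' !ffunE x'xi subrr.
  rewrite mulf_eq0 (negbTE t0) /= => /eqP wi.
  by move: (dxy i); rewrite !ffunE wi mulr0 => /eqP; rewrite subr_eq0 (negbTE xyi).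
case: (phiP nxy) => [_ _ nyy | i fd _ | i fd _ | i fd _] /esym.
- case/(phi_DOT nx'y) => x'y _ _ _; move/eqP: nyy; apply.
  have /eqP : t * dotp y w = 0 by rewrite -(dotp_proportional y dxx') dotpBr !(dotpC y) x'y subrr.
  rewrite mulf_eq0 (negbTE t0) /= => /eqP yw.
  by apply/eqP; rewrite -subr_eq0 (dotpC x) -dotpBr (dotp_proportional y dxy) yw mulr0.
- by case/(phi_ZERO nx'y) => _ /(same_lex_pair _ fd).
- by case/(phi_UP nx'y) => _ /(same_lex_pair _ fd).
- by case/(phi_DOWN nx'y) => _ /(same_lex_pair _ fd).
Qed.

Lemma leftover_collinear_card S :
  leftover lt S -> {in S, forall x, nzvec x} -> collinear S -> (#|S| <= 2)%N.
Proof.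
case=> [S' -> // | A B g /set0Pn[a0 ha0] /set0Pn[b0 hb0] dAB _ _ _ hg _] nz colS.
have at_most_one (Y : {set vec F d}) y : Y \subset A :|: B -> y \in A :|: B -> y \notin Y ->
    {in Y, forall x, phi lt x y = g} -> (#|Y| <= 1)%N.
  move=> /subsetP YS yS yY Yg; rewrite leqNgt; apply/card_gt1P => -[x [x' [hx hx' nxx']]].
  have neq z : z \in Y -> z != y by move=> hz; apply/eqP => zy; rewrite -zy hz in yY.
  move/eqP: (collinear_phi_neq colS (YS _ hx) (YS _ hx') yS nxx' (neq _ hx) (neq _ hx')).
  by rewrite !Yg.
apply: leq_trans (leq_card_setU A B) _; apply: (@leq_add _ _ 1 1).
  apply: (at_most_one _ b0); first exact: subsetUl.
  - by rewrite inE hb0 orbT.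
  - by rewrite (disjointFl dAB hb0).
  - by move=> a ha; apply: hg.
apply: (at_most_one _ a0); first exact: subsetUr.
- by rewrite inE ha0.
- by rewrite (disjointFr dAB ha0).
- by move=> b hb; rewrite phiC ?nz ?inE ?ha0 ?hb ?orbT //; apply: hg.
Qed.

(* What a constant colour across the split [A :|: B] of a leftover set reveals. *)
Variant split_spec A B : Prop :=
  | SplitDot c of c != 0
      & {in A & B, forall a b, [/\ dotp a b = c, c != dotp a a & c != dotp b b]}
  | SplitLex (p : 'I_d * F) of
      {in A & B, forall a b, first_diff_at a b p.1 /\ a p.1 + b p.1 = p.2}
      & {in A & A & B, forall a a' b, dotp a b = dotp a' b}
        \/ {in A & B & B, forall a b b', dotp a b = dotp a b'}.

Lemma split_specC A B : split_spec A B -> split_spec B A.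
Proof.
case=> [c c0 AB | p fd dAB].
  apply: (SplitDot c0) => b a hb ha.
  by have [abc ? ?] := AB a b ha hb; rewrite dotpC.
apply: (SplitLex (p := p)) => [b a hb ha|].
  by have [fdab sab] := fd a b ha hb; rewrite first_diff_atC addrC.
case: dAB => AAB; [right => b a a' hb ha ha' | left => b b' a hb hb' ha];
  by rewrite ?(dotpC b) ?(dotpC b'); apply: AAB.
Qed.

Lemma coord_const_of_sum A B i s a0 b0 : a0 \in A -> b0 \in B ->
  {in A & B, forall a b, first_diff_at a b i /\ a i + b i = s} ->
  {in A &, forall a a', a i = a' i} /\ {in B &, forall b b', b i = b' i}.
Proof.
move=> ha0 hb0 fd; split=> [a a' ha ha' | b b' hb hb'].
  by apply: (addIr (b0 i)); rewrite (fd a b0 ha hb0).2 (fd a' b0 ha' hb0).2.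
by apply: (addrI (a0 i)); rewrite (fd a0 b ha0 hb).2 (fd a0 b' ha0 hb').2.
Qed.

Lemma split_specP A B g : A != set0 -> B != set0 -> [disjoint A & B] ->
  {in A & B, forall a b, phi lt a b = g} -> split_spec A B.
Proof.
move=> /set0Pn[a0 ha0] /set0Pn[b0 hb0] dAB.
have neq : {in A & B, forall a b, a != b}.
  by move=> a b ha /(disjointFl dAB); apply: contraFneq => <-.
case: g => [c | [p | [p | p]]] hg.
- have [_ c0 _ _] := phi_DOT (neq _ _ ha0 hb0) (hg _ _ ha0 hb0).
  apply: (SplitDot c0) => a b ha hb.
  by have [? _ ? ?] := phi_DOT (neq _ _ ha hb) (hg _ _ ha hb).
- have zero a b (ha : a \in A) (hb : b \in B) := phi_ZERO (neq a b ha hb) (hg _ _ ha hb).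
  apply: (SplitLex (p := p)) => [a b ha hb | ]; first by have [] := zero a b ha hb.
  left=> a a' b ha ha' hb.
  by have [_ _ ->] := zero a b ha hb; have [_ _ ->] := zero a' b ha' hb.
- have up a b (ha : a \in A) (hb : b \in B) := phi_UP (neq a b ha hb) (hg _ _ ha hb).
  have fd : {in A & B, forall a b, first_diff_at a b p.1 /\ a p.1 + b p.1 = p.2}.
    by move=> a b ha hb; have [] := up a b ha hb.
  have [cA cB] := coord_const_of_sum ha0 hb0 fd.
  have dot a b : a \in A -> b \in B ->
      dotp a b = if lt (a0 p.1) (b0 p.1) then dotp a a else dotp b b.
    by move=> ha hb; have [_ _ ->] := up a b ha hb; rewrite (cA a a0) ?(cB b b0).
  apply: (SplitLex fd); case: (lt (a0 p.1) (b0 p.1)) dot => dot;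
    [right=> a b b' ha hb hb' | left=> a a' b ha ha' hb]; by rewrite !dot.
- have down a b (ha : a \in A) (hb : b \in B) := phi_DOWN (neq a b ha hb) (hg _ _ ha hb).
  have fd : {in A & B, forall a b, first_diff_at a b p.1 /\ a p.1 + b p.1 = p.2}.
    by move=> a b ha hb; have [] := down a b ha hb.
  have [cA cB] := coord_const_of_sum ha0 hb0 fd.
  have dot a b : a \in A -> b \in B ->
      dotp a b = if lt (a0 p.1) (b0 p.1) then dotp b b else dotp a a.
    by move=> ha hb; have [_ _ ->] := down a b ha hb; rewrite (cA a a0) ?(cB b b0).
  apply: (SplitLex fd); case: (lt (a0 p.1) (b0 p.1)) dot => dot;
    [left=> a a' b ha ha' hb | right=> a b b' ha hb hb']; by rewrite !dot.
Qed.

End Coloring.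

Section Space.
Variable F : finFieldType.
Implicit Types (a b x y u v w n m : vec F 3) (A B X : {set vec F 3}).

Definition i0 : 'I_3 := @Ordinal 3 0 isT.
Definition i1 : 'I_3 := @Ordinal 3 1 isT.
Definition i2 : 'I_3 := @Ordinal 3 2 isT.

Lemma ord3P (i : 'I_3) : [\/ i = i0, i = i1 | i = i2].
Proof.
by case: i => [[|[|[|//]]] ?]; [constructor 1 | constructor 2 | constructor 3]; apply: val_inj.
Qed.

Lemma dotp3E x y : dotp x y = x i0 * y i0 + x i1 * y i1 + x i2 * y i2.
Proof.
rewrite /dotp !big_ord_recr big_ord0 /= add0r.
by congr (x _ * y _ + x _ * y _ + x _ * y _); apply: val_inj.
Qed.

Definition cross u v : vec F 3 := [ffun i =>
  if i == i0 then u i1 * v i2 - u i2 * v i1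
  else if i == i1 then u i2 * v i0 - u i0 * v i2
  else u i0 * v i1 - u i1 * v i0].

Lemma cross0r u : cross u 0 = 0.
Proof. by apply/ffunP => i; rewrite !ffunE !mulr0 subrr !if_same. Qed.

Lemma cross_cross u v w i : cross u (cross v w) i = dotp u w * v i - dotp u v * w i.
Proof. by rewrite !ffunE !dotp3E; case: (ord3P i) => ->; rewrite /=; ring. Qed.

Lemma proportional_of_cross_eq0 u v : v != 0 -> cross u v = 0 -> proportional u v.
Proof.
(* [cross (delta i) (cross u v)] is [v i * u - u i * v]. *)
case/vec_neq0P=> i vi uv; exists (u i / v i) => j; apply: (mulIf vi).
rewrite mulrAC divfK // mulrC; apply/eqP; rewrite -subr_eq0.
have := cross_cross (delta i) u v j.
by rewrite uv cross0r ffunE !(dotpC (delta i)) !dotp_delta => <-.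
Qed.

Lemma collinear_of_dot_const X n m :
  m != 0 -> ~ proportional n m -> dot_const X n -> dot_const X m -> collinear X.
Proof.
(* [x - y] is orthogonal to [n] and [m], hence parallel to [cross n m]. *)
move=> m0 nm cn cm; exists (cross n m) => x y hx hy.
apply: proportional_of_cross_eq0; first by apply/eqP => /(proportional_of_cross_eq0 m0).
apply/ffunP => i; rewrite cross_cross !dotpBl (cn x y) ?(cm x y) //.
by rewrite !subrr !mul0r subrr ffunE.
Qed.

Lemma collinear_of_dot_pair X x u v : u != v -> dotp x u = dotp x v -> dotp x v != 0 ->
  dot_const X u -> dot_const X v -> collinear X.
Proof.
move=> uv xuv xv0; apply: collinear_of_dot_const (not_proportional uv xuv xv0).
by apply: contraNneq xv0 => ->; rewrite dotp0r.
Qed.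

Definition coplanar X := exists2 n, n != 0 & dot_const X n.

Lemma split_spec_coplanar A B : A != set0 -> B != set0 -> split_spec A B -> coplanar A.
Proof.
move=> /set0Pn[a0 ha0] /set0Pn[b0 hb0] [c c0 AB | p fd _].
  exists b0.
    by apply: contraNneq c0 => b00; have [<- _ _] := AB a0 b0 ha0 hb0; rewrite b00 dotp0r.
  by move=> a a' ha ha'; have [-> _ _] := AB a b0 ha hb0; have [-> _ _] := AB a' b0 ha' hb0.
exists (delta p.1); first exact: delta_neq0.
have [cA _] := coord_const_of_sum ha0 hb0 fd.
by move=> a a' ha ha'; rewrite !dotp_delta; apply: cA.
Qed.

Lemma split_spec_collinear_coplanar A B : A != set0 -> B != set0 -> split_spec A B ->
  coplanar (A :|: B) -> collinear A.
Proof.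
move=> /set0Pn[a0 ha0] /set0Pn[b0 hb0] + [n n0 cn].
have inA a : a \in A -> a \in A :|: B by move=> ha; rewrite inE ha.
have inB b : b \in B -> b \in A :|: B by move=> hb; rewrite inE hb orbT.
have cnA : dot_const A n by move=> a a' ha ha'; apply: cn; apply: inA.
have a0b0n : dotp a0 n = dotp b0 n by apply: cn; [apply: inA | apply: inB].
case=> [c c0 AB | p fd _].
  have [a0b0 _ b0b0] := AB a0 b0 ha0 hb0.
  apply: (collinear_of_dot_const (n := b0) n0) => // [[t b0n] | a a' ha ha'].
    by move/eqP: b0b0; apply; rewrite -a0b0 !(dotp_proportional _ b0n) a0b0n.
  by have [-> _ _] := AB a b0 ha hb0; have [-> _ _] := AB a' b0 ha' hb0.
have [cA _] := coord_const_of_sum ha0 hb0 fd.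
apply: (collinear_of_dot_const (delta_neq0 F p.1) _ cnA) => [[t nd] | a a' ha ha'].
  have t0 : t != 0 by apply: contraNneq n0 => t0; apply/eqP/ffunP => i; rewrite nd t0 mul0r ffunE.
  have [/andP[/eqP + _] _] := fd a0 b0 ha0 hb0; apply.
  by apply: (mulfI t0); rewrite -!dotp_delta -!(dotp_proportional _ nd).
by rewrite !dotp_delta; apply: cA.
Qed.

Lemma split_spec_collinear_card A B : split_spec A B -> {in B, forall b, nzvec b} ->
  (1 < #|A|)%N -> (1 < #|B|)%N -> collinear A.
Proof.
move=> + nzB /card_gt1P[a0 [_ [ha0 _ _]]] /card_gt1P[b [b' [hb hb' bb']]].
case=> [c c0 AB | p fd dots].
  have [abc _ _] := AB a0 b ha0 hb; have [ab'c _ _] := AB a0 b' ha0 hb'.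
  apply: (collinear_of_dot_pair (x := a0) bb'); rewrite ?abc ?ab'c //.
    by move=> a a' ha ha'; have [-> _ _] := AB a b ha hb; have [-> _ _] := AB a' b ha' hb.
  by move=> a a' ha ha'; have [-> _ _] := AB a b' ha hb'; have [-> _ _] := AB a' b' ha' hb'.
have [cA cB] := coord_const_of_sum ha0 hb fd.
have cA0 : dot_const A (delta i0).
  move=> a a' ha ha'; rewrite !dotp_delta.
  have [p0 | p0] := eqVneq p.1 i0; first by rewrite -p0; apply: cA.
  have first_coord a1 : a1 \in A -> a1 i0 = b i0.
    by move=> ha1; have [/andP[_ /forallP/(_ i0)]] := fd a1 b ha1 hb; rewrite lt0n p0 => /eqP.
  by rewrite !first_coord.
have [p0 | p0] := eqVneq p.1 i0; last first.
  rewrite eq_sym in p0.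
  apply: collinear_of_dot_const (delta_neq0 F p.1) (delta_not_proportional p0) cA0 _.
  by move=> a a' ha ha'; rewrite !dotp_delta; apply: cA.
have bb'0 : b i0 = b' i0 by rewrite -p0; apply: cB.
case: dots => [AAB | ABB].
  apply: (collinear_of_dot_pair (x := delta i0) bb'); rewrite ?(dotpC (delta i0)) ?dotp_delta //.
  - exact: (forallP (nzB _ hb')).
  - by move=> a a' ha ha'; apply: AAB.
  - by move=> a a' ha ha'; apply: AAB.
apply: (collinear_of_dot_const (n := b - b') (delta_neq0 F i0)) cA0 => [[t nd] | a a' ha ha'].
  have t0 : t = 0 by move: (nd i0); rewrite !ffunE bb'0 subrr eqxx mulr1.
  move/eqP: bb'; apply; apply/ffunP => i; apply/eqP.
  by move: (nd i) => /eqP; rewrite t0 mul0r !ffunE subr_eq0.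
by rewrite !dotpBr (ABB a b b') ?(ABB a' b b') ?subrr.
Qed.

Variable lt : rel F.
Hypothesis lt_order : linear_order_on_units lt.

Lemma leftover_coplanar_card S :
  leftover lt S -> {in S, forall x, nzvec x} -> coplanar S -> (#|S| <= 4)%N.
Proof.
case=> [S' -> // | A B g nA nB dAB lA lB _ hg _] nz copS.
have cs := split_specP nA nB dAB hg.
apply: leq_trans (leq_card_setU A B) _; apply: (@leq_add _ _ 2 2).
  apply: leftover_collinear_card lA _ (split_spec_collinear_coplanar nA nB cs copS) => //.
  by move=> a ha; apply: nz; rewrite inE ha.
apply: leftover_collinear_card lB _ _ => //; first by move=> b hb; apply: nz; rewrite inE hb orbT.
by apply: split_spec_collinear_coplanar nB nA (split_specC cs) _; rewrite setUC.
Qed.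

Lemma leftover_card S : leftover lt S -> {in S, forall x, nzvec x} -> (#|S| <= 5)%N.
Proof.
case=> [S' -> // | A B g nA nB dAB lA lB _ hg _] nz.
have cs := split_specP nA nB dAB hg.
have nzA : {in A, forall a, nzvec a} by move=> a ha; apply: nz; rewrite inE ha.
have nzB : {in B, forall b, nzvec b} by move=> b hb; apply: nz; rewrite inE hb orbT.
have A4 := leftover_coplanar_card lA nzA (split_spec_coplanar nA nB cs).
have B4 := leftover_coplanar_card lB nzB (split_spec_coplanar nB nA (split_specC cs)).
apply: leq_trans (leq_card_setU A B) _.
have [A1 | A2] := leqP #|A| 1; first exact: leq_add A1 B4.
have [B1 | B2] := leqP #|B| 1; first by rewrite addnC; apply: leq_add B1 A4.
apply: (@leq_trans (2 + 2)) => //; apply: leq_add.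
  exact: leftover_collinear_card lA nzA (split_spec_collinear_card cs nzB A2 B2).
exact: leftover_collinear_card lB nzB (split_spec_collinear_card (split_specC cs) nzA B2 A2).
Qed.

End Space.

Local Close Scope ring_scope.

Theorem corollary3p12 (F : finFieldType) (lt : rel F) :
  odd #|F| ->
  linear_order_on_units lt ->
  forall S : {set vec F 3},
    (forall x, x \in S -> nzvec x) ->
    #|S| = 6 ->
    ~ leftover lt S.
Proof. by move=> _ lt_order S nz S6 /(leftover_card lt_order)/(_ nz); rewrite S6. Qed.
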